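(* Let $n$ be sufficiently large and let $K_{2n+1}$ be ND-coloured. Let $x,y\in V(K_{2n+1})$ be distinct vertices, let $C\subseteq C(K_{2n+1})$ be a set of $100$ colours, and let $X\subseteq V(K_{2n+1})$ and $C'\subseteq C(K_{2n+1})$ satisfy $|X|\leq n/10^3$ and $|C'|\leq n/10^3$. Then there is a set $\bar{C}\subseteq C(K_{2n+1})\setminus (C\cup C')$ of $694$ colours and a set $\bar{X}\subseteq V(K_{2n+1})\setminus X$ of at most $1500$ vertices such that, for each $c\in C$, there is a $(\bar{C}\cup \{c\})$-rainbow $x,y$-path of length $695$ all of whose internal vertices lie in $\bar{X}$.
   Context: ND-colouring of $K_{2n+1}$: vertex set $\{0,\dots,2n\}$, edge $ij$ has colour $k\in\{1,\dots,n\}$ where $i-j\equiv\pm k\pmod{2n+1}$; $C(K_{2n+1})=\{1,\dots,n\}$. A graph is $D$-rainbow if its edges have distinct colours all in $D$. Length of a path is its number of edges. *)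

From mathcomp Require Import all_boot.
Set Implicit Arguments. Unset Strict Implicit. Unset Printing Implicit Defensive.

(* ND-colouring of K_{2n+1}: vertices are 'I_(2n+1); the edge ij gets the
   colour k in {1..n} with i - j = +-k (mod 2n+1). *)
Definition nd_col (n : nat) (i j : 'I_(2 * n + 1)) : nat :=
  let d := (i + (2 * n + 1) - j) %% (2 * n + 1) in minn d (2 * n + 1 - d).

Definition nd_colours (n : nat) : {set 'I_n.+1} := [set k : 'I_n.+1 | 0 < k].

Definition edges_of (T : Type) (p : seq T) : seq (T * T) := zip p (behead p).

Definition is_xy_path (n : nat) (x y : 'I_(2 * n + 1)) (p : seq 'I_(2 * n + 1)) : bool :=
  [&& p != [::], head x p == x, last x p == y & uniq p].

Definition path_length (T : Type) (p : seq T) : nat := (size p).-1.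

Definition internal_vertices (T : Type) (p : seq T) : seq T :=
  take (size p).-2 (behead p).

Definition path_colours (n : nat) (p : seq 'I_(2 * n + 1)) : seq nat :=
  [seq nd_col e.1 e.2 | e <- edges_of p].

Definition rainbow (n : nat) (D : {set 'I_n.+1}) (p : seq 'I_(2 * n + 1)) : bool :=
  uniq (path_colours p) &&
  all (fun k => k \in [seq val d | d <- enum D]) (path_colours p).

From mathcomp Require Import all_boot all_algebra zify ring.
Set Implicit Arguments. Unset Strict Implicit. Unset Printing Implicit Defensive.
Import GRing.Theory.

(* For a colour c with h = c/2 (in Z/(2n+1)) and fresh r, A, the vertices
   r, r - A, r - h, r + A, r + h form a gadget: the routes r, r + A, r + h and
   r, r - A, r - h, r + h both lead from r to r + h, and their colour sets
   {A, h - A} and {A, h - A, c} differ exactly by c.  Chaining one gadget for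
   each of the 100 colours of C, starting from x, and then joining the last
   gadget to y through 393 fresh vertices, we get for every c in C an x,y-path
   of length 300 + 1 + 394 = 695 whose colours are c together with 694 colours
   that do not depend on c.  Every new vertex or shift is chosen greedily: it
   must avoid a bounded number of values for each vertex and colour used so
   far or forbidden by X and C', which is far fewer than 2n + 1 values. *)

Lemma exists_notin (T : finType) (S : seq T) :
  (size S < #|T|)%N -> exists z, z \notin S.
Proof.
move=> small; case: (pickP [predC S]) => [z zS | S_full]; first by exists z.
suff: (#|T| <= size S)%N by rewrite leqNgt small.
apply: leq_trans (card_size S); apply/subset_leq_card/subsetP => z _.
by have /negbFE := S_full z.
Qed.

Lemma notin_cat (T : eqType) (z : T) (s1 s2 : seq T) :
  z \notin s1 ++ s2 -> z \notin s1 /\ z \notin s2.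
Proof. by rewrite mem_cat negb_or => /andP. Qed.

Section ZmodTranslates.
Variable V : zmodType.
Local Open Scope ring_scope.

Lemma addr_eq_id (u a : V) : (u + a == u) = (a == 0).
Proof. by rewrite -[X in _ == X]addr0 (inj_eq (addrI u)). Qed.

Lemma mem_map_addr (a : V) (S : seq V) (z : V) :
  (z \in [seq s + a | s <- S]) = (z - a \in S).
Proof.
apply/mapP/idP => [[s sS ->]|zS]; first by rewrite addrK.
by exists (z - a); rewrite ?subrK.
Qed.

Lemma mem_map_subr (a : V) (S : seq V) (z : V) :
  (z \in [seq s - a | s <- S]) = (z + a \in S).
Proof. by rewrite mem_map_addr opprK. Qed.

Lemma mem_map_subl (a : V) (S : seq V) (z : V) :
  (z \in [seq a - s | s <- S]) = (a - z \in S).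
Proof.
apply/mapP/idP => [[s sS ->]|zS]; first by rewrite opprB addrC subrK.
by exists (a - z); rewrite // opprB addrC subrK.
Qed.

End ZmodTranslates.

Lemma internal_vertices_rcons (T : Type) (a b : T) (s : seq T) :
  internal_vertices (a :: rcons s b) = s.
Proof. by rewrite /internal_vertices /= size_rcons -cats1 take_size_cat. Qed.

Lemma path_lengthE n (p : seq 'I_(2 * n + 1)) : path_length p = size (path_colours p).
Proof.
by rewrite /path_length size_map size_zip size_behead; apply/esym/minn_idPr/leq_pred.
Qed.

Lemma is_xy_path_rcons n (x y : 'I_(2 * n + 1)) (W : seq 'I_(2 * n + 1)) :
  uniq (x :: y :: W) -> is_xy_path x y (x :: rcons W y).
Proof.
move=> uxyW; apply/and4P; split; [by [] | exact: eqxx | by rewrite /= last_rcons |].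
by rewrite (perm_uniq (_ : perm_eq _ (x :: y :: W))) // perm_cons perm_rcons.
Qed.

Lemma card_set_val n (K : seq nat) :
  uniq K -> all (fun k => k < n) K -> #|[set i : 'I_n | val i \in K]| = size K.
Proof.
move=> uK Kn; have -> : [set i : 'I_n | val i \in K] = [set i in pmap insub K].
  by apply/setP => i; rewrite !inE mem_pmap_sub.
rewrite cardsE (card_uniqP (pmap_sub_uniq _ uK)) size_pmap_sub.
by apply/eqP; rewrite -all_count.
Qed.

Lemma set_val_subset n (D : {set 'I_n.+1}) (K : seq nat) :
  all (fun k => [&& 0 < k, k <= n & k \notin [seq val d | d <- enum D]]) K ->
  [set i : 'I_n.+1 | val i \in K] \subset nd_colours n :\: D.
Proof.
move=> K_ok; apply/subsetP => i; rewrite !inE => iK.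
have /and3P[i_gt0 _ iD] := allP K_ok _ iK; rewrite i_gt0 andbT.
by apply: contra iD => iD; rewrite map_f ?mem_enum.
Qed.

Lemma rainbow_setU1 n (c : 'I_n.+1) (K : seq nat) (p : seq 'I_(2 * n + 1)) :
  perm_eq (path_colours p) (val c :: K) -> uniq (val c :: K) ->
  all (fun k => k < n.+1) K -> rainbow (c |: [set i : 'I_n.+1 | val i \in K]) p.
Proof.
move=> pK uK Kn; rewrite /rainbow (perm_uniq pK) uK /=.
apply/allP => k; rewrite (perm_mem pK) inE => /predU1P[-> | kK].
  by rewrite map_f // mem_enum setU11.
have kn : k < n.+1 := allP Kn _ kK.
by apply/mapP; exists (Ordinal kn); rewrite // mem_enum !inE kK orbT.
Qed.

Lemma nd_colours_vals n (C : {set 'I_n.+1}) :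
  C \subset nd_colours n -> all (fun c => 0 < c <= n) [seq val c | c <- enum C].
Proof.
move=> sC; apply/allP => _ /mapP[c c_in ->]; rewrite mem_enum in c_in.
by have := subsetP sC c c_in; rewrite inE => ->; rewrite -ltnS ltn_ord.
Qed.

Section NDColouringZp.
Variable n : nat.
Hypothesis n_gt0 : (0 < n)%N.
Local Notation m := (2 * n + 1)%N.
Local Notation Zm := 'Z_m.
Local Open Scope ring_scope.

Lemma m_gt1 : (1 < m)%N. Proof. lia. Qed.

Lemma Zp_val_lt (z : Zm) : (z < m)%N.
Proof. by apply: leq_trans (ltn_ord z) _; rewrite Zp_cast // m_gt1. Qed.

Lemma val_Zp_natE (k : nat) : (k%:R : Zm) = (k %% m)%N :> nat.
Proof. by rewrite val_Zp_nat // m_gt1. Qed.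

Lemma Zp_char : (m%:R : Zm) = 0.
Proof. by rewrite pchar_Zp // m_gt1. Qed.

(* For symbolic [n], ['Z_m] is ['I_(Zp_trunc m).+2], which is not convertible
   to ['I_m]; hence the explicit conversions. *)
Definition ord_of_Zp (z : Zm) : 'I_m := Ordinal (Zp_val_lt z).
Definition Zp_of_ord (i : 'I_m) : Zm := (val i)%:R.

Lemma Zp_of_ordK : cancel Zp_of_ord ord_of_Zp.
Proof. by move=> i; apply: val_inj; rewrite /= val_Zp_natE modn_small ?ltn_ord. Qed.

Lemma ord_of_ZpK : cancel ord_of_Zp Zp_of_ord.
Proof. by move=> z; rewrite /Zp_of_ord natr_Zp. Qed.

Lemma Zp_of_ord_neq (i j : 'I_m) : i != j -> Zp_of_ord i != Zp_of_ord j.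
Proof. by rewrite (can_eq Zp_of_ordK). Qed.

Definition diff_col (d : Zm) : nat := minn d (m - d).

Lemma Zp_subE (u v : Zm) : u - v = (val u + m - val v)%N%:R.
Proof.
rewrite -addnBA; last exact/ltnW/Zp_val_lt.
by rewrite natrD natrB ?Zp_char ?natr_Zp ?add0r //; exact/ltnW/Zp_val_lt.
Qed.

Lemma nd_col_Zp (u v : Zm) : nd_col (ord_of_Zp u) (ord_of_Zp v) = diff_col (u - v).
Proof. by rewrite /nd_col /diff_col Zp_subE val_Zp_natE. Qed.

Lemma diff_col_le (z : Zm) : (diff_col z <= n)%N.
Proof. have := Zp_val_lt z; rewrite /diff_col; lia. Qed.

Lemma diff_col_nat (k : nat) : (k <= n)%N -> diff_col k%:R = k.
Proof. by move=> kn; rewrite /diff_col val_Zp_natE modn_small; lia. Qed.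

Lemma diff_colN (z : Zm) : diff_col (- z) = diff_col z.
Proof.
rewrite -sub0r Zp_subE /diff_col val_Zp_natE /=.
have := Zp_val_lt z; case: (nat_of_ord z) => [|v] lt; last by rewrite modn_small; lia.
by rewrite add0n subn0 modnn; lia.
Qed.

Lemma diff_colE (z : Zm) : z = (diff_col z)%:R \/ z = - (diff_col z)%:R.
Proof.
have lt := Zp_val_lt z; rewrite /diff_col.
case: (leqP z (m - z)) => h.
  by left; rewrite natr_Zp.
right; rewrite natrB ?Zp_char ?natr_Zp ?sub0r ?opprK //; lia.
Qed.

Lemma diff_col_inj (a b : Zm) : diff_col a = diff_col b -> a = b \/ a = - b.
Proof.
move=> e; case: (diff_colE a) (diff_colE b) => -> [] ->; rewrite e ?opprK; by [left | right].
Qed.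

Lemma diff_col_gt0 (z : Zm) : z != 0 -> (0 < diff_col z)%N.
Proof.
rewrite lt0n; apply: contra => /eqP c0.
by case: (diff_colE z) => ->; rewrite c0 ?oppr0.
Qed.

Lemma natr_Zp_neq0 (c : nat) : (0 < c <= n)%N -> (c%:R : Zm) != 0.
Proof.
case/andP=> c0 cn; apply: contraTneq c0 => /(congr1 diff_col).
by rewrite diff_col_nat // /diff_col min0n => ->.
Qed.

(* [n + 1] is the inverse of [2] modulo [2n + 1]. *)
Definition half (z : Zm) : Zm := n.+1%:R * z.

Lemma halfDhalf (z : Zm) : half z + half z = z.
Proof.
have two_inv : n.+1%:R * 2%:R = 1 :> Zm.
  by rewrite -natrM (_ : (n.+1 * 2 = m + 1)%N) 1?natrD ?Zp_char ?add0r //; lia.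
by rewrite /half -mulrDr -[z + z]mulr2n -[z *+ 2]mulr_natl mulrA two_inv mul1r.
Qed.

Lemma half_double (z : Zm) : half (z + z) = z.
Proof. by rewrite /half mulrDr halfDhalf. Qed.

Lemma double_eq0 (z : Zm) : z + z = 0 -> z = 0.
Proof. by move=> zz0; rewrite -(half_double z) zz0 /half mulr0. Qed.

Lemma card_Zm : #|Zm| = m.
Proof. by rewrite card_ord Zp_cast ?m_gt1. Qed.

Lemma exists_Zp_notin (S : seq Zm) : (size S < m)%N -> exists z, z \notin S.
Proof. by move=> small; apply: exists_notin; rewrite card_Zm. Qed.

Definition diffs_of_cols (K : seq nat) : seq Zm :=
  [seq k%:R | k <- K] ++ [seq - k%:R | k <- K].

Lemma diffs_of_colsP K z : diff_col z \in K -> z \in diffs_of_cols K.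
Proof.
move=> zK; rewrite mem_cat; case: (diff_colE z) => ->.
  by rewrite (map_f (fun k : nat => k%:R : Zm)).
by rewrite (map_f (fun k : nat => - k%:R : Zm)) ?orbT.
Qed.

Lemma size_diffs_of_cols K : size (diffs_of_cols K) = (2 * size K)%N.
Proof. by rewrite size_cat !size_map addnn -mul2n. Qed.

Definition diff_cols (l : seq Zm) : seq nat :=
  [seq diff_col (e.1 - e.2) | e <- zip l (behead l)].

Lemma diff_cols_cons2 a b l :
  diff_cols (a :: b :: l) = diff_col (a - b) :: diff_cols (b :: l).
Proof. by []. Qed.

Lemma size_diff_cols l : size (diff_cols l) = (size l).-1.
Proof. by case: l => //= a l; rewrite size_map size_zip /= minnE subSnn subn1. Qed.

Lemma path_colours_Zp (l : seq Zm) : path_colours (map ord_of_Zp l) = diff_cols l.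
Proof.
elim: l => [|a [|b l] IH] //.
by rewrite map_cons diff_cols_cons2 -IH -nd_col_Zp.
Qed.

Record gadget := Gadget { gcol : nat; gcentre : Zm; gshift : Zm }.

Definition gadget_vtxs (g : gadget) : seq Zm :=
  let: Gadget c r A := g in [:: r; r - A; r - half c%:R; r + A; r + half c%:R].

Definition gadget_exit (g : gadget) : Zm := gcentre g + half (gcol g)%:R.

Definition gadget_cols (p : Zm) (g : gadget) : seq nat :=
  let: Gadget c r A := g in [:: diff_col (p - r); diff_col A; diff_col (half c%:R - A)].

Definition gadget_route (c0 : nat) (g : gadget) : seq Zm :=
  let: Gadget c r A := g in
  r :: (if c == c0 then [:: r - A; r - half c%:R] else [:: r + A]) ++ [:: r + half c%:R].

Definition chain_vtxs (gs : seq gadget) : seq Zm := flatten (map gadget_vtxs gs).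

Definition chain_route (c0 : nat) (gs : seq gadget) : seq Zm :=
  flatten (map (gadget_route c0) gs).

Definition chain_exit (p : Zm) (gs : seq gadget) : Zm := last p (map gadget_exit gs).

Fixpoint chain_cols (p : Zm) (gs : seq gadget) : seq nat :=
  if gs is g :: gs' then gadget_cols p g ++ chain_cols (gadget_exit g) gs' else [::].

Lemma size_chain_vtxs gs : size (chain_vtxs gs) = (5 * size gs)%N.
Proof. by elim: gs => [|[c r A] gs IH] //=; rewrite IH mulnS. Qed.

Lemma size_chain_cols p gs : size (chain_cols p gs) = (3 * size gs)%N.
Proof. by elim: gs p => [|[c r A] gs IH] p //=; rewrite IH mulnS. Qed.

Lemma gadget_route_subseq c0 g : subseq (gadget_route c0 g) (gadget_vtxs g).
Proof.
case: g => c r A; apply/subseqP; rewrite /gadget_route.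
case: (c == c0).
  by exists [:: true; true; true; false; true].
by exists [:: true; false; false; true; true].
Qed.

Lemma chain_route_subseq c0 gs : subseq (chain_route c0 gs) (chain_vtxs gs).
Proof. by elim: gs => //= g gs IH; rewrite cat_subseq ?gadget_route_subseq. Qed.

Lemma diff_cols_gadget_route c0 g p t : (gcol g <= n)%N ->
  diff_cols (p :: gadget_route c0 g ++ t) =
  gadget_cols p g ++ nseq (gcol g == c0) c0 ++ diff_cols (gadget_exit g :: t).
Proof.
case: g => c r A /= cn; case: eqP => [<-|_] /=; rewrite !diff_cols_cons2.
  have -> : r - (r - A) = A by ring.
  have -> : r - A - (r - half c%:R) = half c%:R - A by ring.
  have -> : r - half c%:R - (r + half c%:R) = - (half c%:R + half c%:R) by ring.
  by rewrite diff_colN halfDhalf diff_col_nat.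
have -> : r - (r + A) = - A by ring.
have -> : r + A - (r + half c%:R) = - (half c%:R - A) by ring.
by rewrite !diff_colN.
Qed.

Lemma diff_cols_chain_route c0 gs p t : all (fun g => gcol g <= n)%N gs ->
  perm_eq (diff_cols (p :: chain_route c0 gs ++ t))
    (nseq (count_mem c0 (map gcol gs)) c0 ++ chain_cols p gs ++
     diff_cols (chain_exit p gs :: t)).
Proof.
elim: gs p => [|g gs IH] p //= /andP[cn gsn].
have -> : chain_route c0 (g :: gs) = gadget_route c0 g ++ chain_route c0 gs by [].
have -> : chain_exit p (g :: gs) = chain_exit (gadget_exit g) gs by [].
rewrite -catA diff_cols_gadget_route //; apply/permP => P.
have := permP (IH (gadget_exit g) gsn) P.
rewrite !count_cat !count_nseq mulnDr => ->; ring.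
Qed.

(* The path is built from [x] to [y] while avoiding the vertices [XL] and the
   colours [FK]; [O] and [Q] are the vertices and colours chosen so far.  As
   [O] never exceeds 900 and [Q] never exceeds 700 elements, [room] leaves a
   free value for every greedy choice. *)
Section FreshChoices.
Variables (x y : Zm) (FK : seq nat) (XL : seq Zm).
Hypothesis x_neq_y : x != y.
Hypothesis room : (3 * (size XL + 900) + 4 * (size FK + 700) < m)%N.

Definition blocked_vtxs (O : seq Zm) : seq Zm := x :: y :: O ++ XL.
Definition blocked_cols (Q : seq nat) : seq nat := FK ++ Q.

Definition valid_vtxs (O : seq Zm) : bool :=
  uniq (x :: y :: O) && all (fun v => v \notin XL) O.
Definition valid_cols (Q : seq nat) : bool :=
  uniq Q && all (fun k => [&& 0 < k, k <= n & k \notin FK]%N) Q.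

Lemma mem_blocked_vtxs (O : seq Zm) (v : Zm) : v \in x :: O -> v \in blocked_vtxs O.
Proof. by rewrite !inE mem_cat => /orP[-> | ->]; rewrite ?orbT. Qed.

Lemma mem_blocked_vtxs_rcons (O : seq Zm) (w v : Zm) :
  (v \in blocked_vtxs (rcons O w)) = (v == w) || (v \in blocked_vtxs O).
Proof.
rewrite /blocked_vtxs -cats1 -catA !(inE, mem_cat).
by case: (v == x) (v == y) (v == w) (v \in O) => [] [] [] [].
Qed.

Lemma mem_blocked_cols_rcons (Q : seq nat) (j k : nat) :
  (k \in blocked_cols (rcons Q j)) = (k == j) || (k \in blocked_cols Q).
Proof. by rewrite /blocked_cols -rcons_cat mem_rcons inE. Qed.

Lemma valid_vtxs_rcons (O : seq Zm) (v : Zm) :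
  valid_vtxs O -> v \notin blocked_vtxs O -> valid_vtxs (rcons O v).
Proof.
case/andP=> uO aO; rewrite /blocked_vtxs -!cat_cons mem_cat negb_or => /andP[vO vXL].
by rewrite /valid_vtxs -!rcons_cons rcons_uniq vO uO all_rcons vXL aO.
Qed.

Lemma valid_vtxs_perm (O V V' : seq Zm) :
  perm_eq V V' -> valid_vtxs (O ++ V) = valid_vtxs (O ++ V').
Proof.
move=> pV; rewrite /valid_vtxs !all_cat (perm_all _ pV).
by congr (_ && _); apply: perm_uniq; rewrite -!cat_cons perm_cat2l.
Qed.

Lemma valid_cols_rcons (Q : seq nat) (z : Zm) : valid_cols Q -> z != 0 ->
  diff_col z \notin blocked_cols Q -> valid_cols (rcons Q (diff_col z)).
Proof.
case/andP=> uQ aQ z0; rewrite /blocked_cols mem_cat negb_or => /andP[zFK zQ].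
by rewrite /valid_cols rcons_uniq zQ uQ all_rcons diff_col_gt0 // diff_col_le zFK aQ.
Qed.

Lemma valid_cols_catl (Q R : seq nat) : valid_cols (Q ++ R) -> valid_cols Q.
Proof. by rewrite /valid_cols cat_uniq all_cat => /andP[/and3P[-> _ _] /andP[-> _]]. Qed.

Lemma exists_gadget_centre (h p : Zm) (O : seq Zm) (Q : seq nat) :
  h != 0 -> h + h != 0 ->
  valid_vtxs O -> valid_cols Q -> p \in x :: O ->
  (size O + 5 <= 900)%N -> (size Q + 3 <= 700)%N ->
  exists r, valid_vtxs (O ++ [:: r; r - h; r + h]) /\
            valid_cols (rcons Q (diff_col (p - r))).
Proof.
move=> h0 hh0 vO vQ pO sO sQ.
have [r] : exists r : Zm,
    r \notin blocked_vtxs O ++ [seq v + h | v <- blocked_vtxs O] ++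
              [seq v - h | v <- blocked_vtxs O] ++
              [seq p - d | d <- diffs_of_cols (blocked_cols Q)].
  apply: exists_Zp_notin.
  rewrite /blocked_vtxs /blocked_cols.
  by rewrite !(size_cat, size_map, size_diffs_of_cols) /= size_cat; lia.
case/notin_cat=> rB /notin_cat[+ /notin_cat[+ +]].
rewrite mem_map_addr mem_map_subr mem_map_subl => r_hB rhB.
move=> /(contra (@diffs_of_colsP _ _)) prQ.
have pr0 : p - r != 0.
  by rewrite subr_eq0; apply: contraNneq rB => <-; exact: mem_blocked_vtxs.
exists r; split; last exact: valid_cols_rcons.
have -> : O ++ [:: r; r - h; r + h] = rcons (rcons (rcons O r) (r - h)) (r + h).
  by rewrite -!cats1 -!catA.
apply: valid_vtxs_rcons; first apply: valid_vtxs_rcons; first exact: valid_vtxs_rcons.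
  by rewrite mem_blocked_vtxs_rcons addr_eq_id oppr_eq0 (negbTE h0).
rewrite !mem_blocked_vtxs_rcons (inj_eq (addrI r)) -addr_eq0 addr_eq_id.
by rewrite (negbTE hh0) (negbTE h0).
Qed.

Lemma exists_gadget_shift (h r : Zm) (O : seq Zm) (Q : seq nat) : h != 0 ->
  valid_vtxs O -> valid_cols Q -> r \in O -> r + h \in O ->
  (size O + 2 <= 900)%N -> (size Q + 2 <= 700)%N ->
  exists A, valid_vtxs (O ++ [:: r - A; r + A]) /\
            valid_cols (Q ++ [:: diff_col A; diff_col (h - A)]).
Proof.
move=> h0 vO vQ rO rhO sO sQ.
have [A] : exists A : Zm,
    A \notin [seq v - r | v <- blocked_vtxs O] ++ [seq r - v | v <- blocked_vtxs O] ++
              diffs_of_cols (blocked_cols Q) ++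
              [seq h - d | d <- diffs_of_cols (blocked_cols Q)] ++ [:: half h].
  (* [A = h/2] is excluded so that the colours [A] and [h - A] differ. *)
  apply: exists_Zp_notin.
  rewrite /blocked_vtxs /blocked_cols.
  by rewrite !(size_cat, size_map, size_diffs_of_cols) /= size_cat; lia.
case/notin_cat=> + /notin_cat[+ /notin_cat[+ /notin_cat[+ +]]].
rewrite mem_map_subr !mem_map_subl inE [A + r]addrC => rAB rAB'.
move=> /(contra (@diffs_of_colsP _ _)) AQ /(contra (@diffs_of_colsP _ _)) hAQ A_half.
have inB v : v \in O -> v \in blocked_vtxs O.
  by move=> vO'; rewrite !inE mem_cat vO' !orbT.
have A0 : A != 0 by apply: contraNneq rAB => ->; rewrite addr0; apply: inB.
have hA0 : h - A != 0 by rewrite subr_eq0; apply: contraNneq rAB => <-; apply: inB.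
exists A; split.
  have -> : O ++ [:: r - A; r + A] = rcons (rcons O (r - A)) (r + A).
    by rewrite -!cats1 -catA.
  apply: valid_vtxs_rcons; first exact: valid_vtxs_rcons.
  rewrite mem_blocked_vtxs_rcons negb_or rAB andbT (inj_eq (addrI r)) -addr_eq0.
  by apply: contra A0 => /eqP/double_eq0 ->.
have -> : Q ++ [:: diff_col A; diff_col (h - A)] =
          rcons (rcons Q (diff_col A)) (diff_col (h - A)) by rewrite -!cats1 -catA.
apply: valid_cols_rcons => //; first exact: valid_cols_rcons.
rewrite mem_blocked_cols_rcons negb_or hAQ andbT.
apply/eqP => /diff_col_inj[hAA | hAA].
  by move: A_half; rewrite -[h](subrK A) hAA half_double inE eqxx.
by move: h0; rewrite -[h](subrK A) hAA addNr eqxx.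
Qed.


Lemma gadget_step (c : nat) (p : Zm) (O : seq Zm) (Q : seq nat) : (0 < c <= n)%N ->
  valid_vtxs O -> valid_cols Q -> p \in x :: O ->
  (size O + 5 <= 900)%N -> (size Q + 3 <= 700)%N ->
  exists r A, valid_vtxs (O ++ gadget_vtxs (Gadget c r A)) /\
              valid_cols (Q ++ gadget_cols p (Gadget c r A)).
Proof.
move=> c_range vO vQ pO sO sQ; set h := half c%:R.
have hh0 : h + h != 0 by rewrite halfDhalf natr_Zp_neq0.
have h0 : h != 0 by apply: contraNneq hh0 => ->; rewrite addr0.
have [r [vO1 vQ1]] := exists_gadget_centre h0 hh0 vO vQ pO sO sQ.
have r_in : r \in O ++ [:: r; r - h; r + h] by rewrite mem_cat !inE eqxx !orbT.
have rh_in : r + h \in O ++ [:: r; r - h; r + h] by rewrite mem_cat !inE eqxx !orbT.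
have [A [vO2 vQ2]] := exists_gadget_shift h0 vO1 vQ1 r_in rh_in
  ltac:(by rewrite size_cat -addnA) ltac:(by rewrite size_rcons addSnnS).
exists r, A; split; last by rewrite -cats1 -catA in vQ2.
have perm_vtxs :
    perm_eq (gadget_vtxs (Gadget c r A)) [:: r; r - h; r + h; r - A; r + A].
  rewrite perm_cons -[[:: r - A; _; _; _]]/([:: r - A] ++ [:: r - h] ++ [:: r + A; r + h]).
  rewrite perm_catCA /= perm_cons -[[:: r - A; _; _]]/([:: r - A; r + A] ++ [:: r + h]).
  by rewrite perm_catC.
by rewrite (valid_vtxs_perm _ perm_vtxs) -catA in vO2 *.
Qed.

Lemma gadget_chain (cs : seq nat) (p : Zm) (O : seq Zm) (Q : seq nat) :
  all (fun c => 0 < c <= n)%N cs -> valid_vtxs O -> valid_cols Q -> p \in x :: O ->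
  (size O + 5 * size cs <= 900)%N -> (size Q + 3 * size cs <= 700)%N ->
  exists gs, [/\ map gcol gs = cs, valid_vtxs (O ++ chain_vtxs gs),
                 valid_cols (Q ++ chain_cols p gs) &
                 chain_exit p gs \in x :: O ++ chain_vtxs gs].
Proof.
elim: cs p O Q => [|c cs IH] p O Q; first by exists [::]; rewrite /= !cats0.
case/andP=> c_range cs_range vO vQ pO; rewrite /= mulnS => sO sQ.
have [r [A [vO1 vQ1]]] :=
  gadget_step c_range vO vQ pO ltac:(clear -sO; lia) ltac:(clear -sQ; lia).
set g := Gadget c r A.
have exit_in : gadget_exit g \in x :: O ++ gadget_vtxs g.
  by rewrite inE mem_cat !inE eqxx !orbT.
have [gs [<- vO2 vQ2 exit_gs]] := IH _ _ _ cs_range vO1 vQ1 exit_in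
  ltac:(rewrite size_cat /=; clear -sO; lia) ltac:(rewrite size_cat /=; clear -sQ; lia).
by rewrite -!catA in vO2 vQ2 exit_gs; exists (g :: gs).
Qed.

Lemma connector_step (p : Zm) (O : seq Zm) (Q : seq nat) :
  valid_vtxs O -> valid_cols Q -> p \in x :: O ->
  (size O + 1 <= 900)%N -> (size Q + 2 <= 700)%N ->
  exists v, valid_vtxs (rcons O v) /\
            valid_cols (Q ++ [:: diff_col (p - v); diff_col (v - y)]).
Proof.
move=> vO vQ pO sO sQ.
have p_neq_y : p != y.
  case/andP: vO => /and3P[_ yO _] _.
  by move: pO; rewrite inE => /orP[/eqP -> // | pO]; apply: contraNneq yO => <-.
have [v] : exists v : Zm,
    v \notin blocked_vtxs O ++ [seq p - d | d <- diffs_of_cols (blocked_cols Q)] ++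
              [seq d + y | d <- diffs_of_cols (blocked_cols Q)] ++ [:: half (p + y)].
  apply: exists_Zp_notin.
  rewrite /blocked_vtxs /blocked_cols.
  by rewrite !(size_cat, size_map, size_diffs_of_cols) /= size_cat; lia.
case/notin_cat=> vB /notin_cat[+ /notin_cat[+ +]].
rewrite mem_map_subl mem_map_addr inE => /(contra (@diffs_of_colsP _ _)) pvQ.
move=> /(contra (@diffs_of_colsP _ _)) vyQ v_mid.
have pv0 : p - v != 0.
  by rewrite subr_eq0; apply: contraNneq vB => <-; exact: mem_blocked_vtxs.
have vy0 : v - y != 0.
  by rewrite subr_eq0; apply: contraNneq vB => ->; rewrite !inE eqxx orbT.
exists v; split; first exact: valid_vtxs_rcons.
have -> : Q ++ [:: diff_col (p - v); diff_col (v - y)] =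
          rcons (rcons Q (diff_col (p - v))) (diff_col (v - y)) by rewrite -!cats1 -catA.
apply: valid_cols_rcons => //; first exact: valid_cols_rcons.
rewrite mem_blocked_cols_rcons negb_or vyQ andbT.
apply/eqP => /diff_col_inj[e | e].
  have pyvv : p + y = v + v.
    have -> : p + y = (p - v) - (v - y) + (v + v) by ring.
    by rewrite e subrr add0r.
  by rewrite pyvv half_double eqxx in v_mid.
have : p - y = 0.
  have -> : p - y = (v - y) + (p - v) by ring.
  by rewrite e addNr.
by move/eqP; rewrite subr_eq0 (negbTE p_neq_y).
Qed.

Lemma connector (k : nat) (p : Zm) (O : seq Zm) (Q : seq nat) :
  valid_vtxs O -> valid_cols Q -> p \in x :: O ->
  (size O + k.+1 <= 900)%N -> (size Q + k.+2 <= 700)%N ->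
  exists vs, [/\ size vs = k.+1, valid_vtxs (O ++ vs) &
                 valid_cols (Q ++ diff_cols (p :: rcons vs y))].
Proof.
elim: k p O Q => [|k IH] p O Q vO vQ pO sO sQ.
  have [v [vO1 vQ1]] := connector_step vO vQ pO sO sQ.
  by exists [:: v]; rewrite cats1.
have [v [vO1 vQ1]] :=
  connector_step vO vQ pO ltac:(clear -sO; lia) ltac:(clear -sQ; lia).
rewrite -cat_rcons in vQ1; have vQ2 := valid_cols_catl vQ1.
have v_in : v \in x :: rcons O v by rewrite inE mem_rcons mem_head orbT.
have [vs [size_vs vO3 vQ3]] := IH _ _ _ vO1 vQ2 v_in
  ltac:(by rewrite size_rcons addSnnS) ltac:(by rewrite size_rcons addSnnS).
by exists (v :: vs); rewrite /= size_vs diff_cols_cons2 -!cat_rcons.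
Qed.

Lemma rainbow_routes (cs : seq nat) :
  size cs = 100%N -> uniq cs -> all (fun c => 0 < c <= n)%N cs ->
  exists K V, [/\ valid_cols K, size K = 694%N, valid_vtxs V, size V = 893%N &
    forall c0, c0 \in cs ->
      exists2 W, subseq W V & perm_eq (diff_cols (x :: rcons W y)) (c0 :: K)].
Proof.
move=> size_cs uniq_cs cs_range.
have v0 : valid_vtxs [::] by rewrite /valid_vtxs /= inE x_neq_y.
have [gs [gcols_gs vV1 vK1 exit_in]] :=
  gadget_chain cs_range v0 (isT : valid_cols [::]) (mem_head x [::])
    ltac:(by rewrite size_cs) ltac:(by rewrite size_cs).
have size_gs : size gs = 100%N by rewrite -(size_map gcol) gcols_gs.
have [vs [size_vs vV vK]] := connector (k := 392) vV1 vK1 exit_in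
  ltac:(by rewrite size_chain_vtxs size_gs) ltac:(by rewrite size_chain_cols size_gs).
exists (chain_cols x gs ++ diff_cols (chain_exit x gs :: rcons vs y)).
exists (chain_vtxs gs ++ vs); split=> //.
- by rewrite size_cat size_chain_cols size_diff_cols /= size_rcons size_vs size_gs.
- by rewrite size_cat size_chain_vtxs size_vs size_gs.
move=> c0 c0_in; exists (chain_route c0 gs ++ vs).
  by rewrite cat_subseq ?chain_route_subseq.
have gs_range : all (fun g => gcol g <= n)%N gs.
  by move: cs_range; rewrite -gcols_gs all_map; apply: sub_all => g /andP[].
rewrite rcons_cat; apply: perm_trans (diff_cols_chain_route c0 _ _ gs_range) _.
by rewrite gcols_gs (count_uniq_mem _ uniq_cs) c0_in.
Qed.

End FreshChoices.

Lemma Zp_route_path (x y : Zm) (W V : seq Zm) (K : seq nat) :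
  uniq (x :: y :: V) -> subseq W V -> perm_eq (diff_cols (x :: rcons W y)) K ->
  [/\ is_xy_path (ord_of_Zp x) (ord_of_Zp y)
        (map ord_of_Zp (x :: rcons W y)),
      path_length (map ord_of_Zp (x :: rcons W y)) = size K,
      perm_eq (path_colours (map ord_of_Zp (x :: rcons W y))) K &
      all (fun v => v \in [set v in map (ord_of_Zp) V])
        (internal_vertices (map ord_of_Zp (x :: rcons W y)))].
Proof.
move=> uV subW pK; rewrite path_lengthE path_colours_Zp (perm_size pK).
have uW : uniq (x :: y :: W).
  by apply: subseq_uniq uV; rewrite /= !eqxx.
rewrite /= map_rcons; split=> //.
  apply: is_xy_path_rcons.
  by rewrite -[_ :: _ :: _]/(map _ (x :: y :: W)) (map_inj_uniq (can_inj ord_of_ZpK)).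
rewrite internal_vertices_rcons; apply/allP => _ /mapP[w wW ->].
by rewrite inE map_f // (mem_subseq subW wW).
Qed.


Lemma ord_of_Zp_set_subsetC (X : {set 'I_m}) (V : seq Zm) :
  all (fun v => v \notin [seq Zp_of_ord i | i <- enum X]) V ->
  [set v in map ord_of_Zp V] \subset ~: X.
Proof.
move=> V_ok; apply/subsetP => v; rewrite !inE => /mapP[w wV ->].
by apply: contra (allP V_ok _ wV) => wX; rewrite -(ord_of_ZpK w) map_f ?mem_enum.
Qed.

End NDColouringZp.

Theorem lemma5p3 :
  exists N : nat, forall n : nat, N <= n ->
  forall (x y : 'I_(2 * n + 1)), x != y ->
  forall (C C' : {set 'I_n.+1}) (X : {set 'I_(2 * n + 1)}),
    C \subset nd_colours n -> #|C| = 100 ->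
    C' \subset nd_colours n -> 1000 * #|C'| <= n ->
    1000 * #|X| <= n ->
  exists (Cbar : {set 'I_n.+1}) (Xbar : {set 'I_(2 * n + 1)}),
    [/\ Cbar \subset nd_colours n :\: (C :|: C'), #|Cbar| = 694,
        Xbar \subset ~: X, #|Xbar| <= 1500 &
        forall c, c \in C ->
          exists p : seq 'I_(2 * n + 1),
            [/\ is_xy_path x y p, path_length p = 695,
                rainbow (c |: Cbar) p &
                all (fun v => v \in Xbar) (internal_vertices p)]].
Proof.
exists 3000 => n n_large x y x_neq_y C C' X sC C100 sC' C'_small X_small.
have n_gt0 : 0 < n by lia.
pose FK := [seq val k | k <- enum (C :|: C')].
pose XL := [seq Zp_of_ord v | v <- enum X].
have room : 3 * (size XL + 900) + 4 * (size FK + 700) < 2 * n + 1.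
  have sizeXL : size XL = #|X| by rewrite size_map cardE.
  have sizeFK : size FK = #|C :|: C'| by rewrite size_map cardE.
  by rewrite sizeXL sizeFK; have := cardsU C C'; lia.
have [K [V [/andP[uK K_ok] size_K /andP[uV V_ok] size_V routes]]] :=
  rainbow_routes n_gt0 (Zp_of_ord_neq n_gt0 x_neq_y) room (cs := [seq val c | c <- enum C])
    ltac:(by rewrite size_map -cardE) ltac:(by rewrite (map_inj_uniq val_inj) enum_uniq)
    (nd_colours_vals sC).
have K_lt : all (fun k => k < n.+1) K by apply: sub_all K_ok => k /and3P[].
exists [set k : 'I_n.+1 | val k \in K], [set v in map (ord_of_Zp n_gt0) V]; split.
- exact: set_val_subset.
- by rewrite card_set_val.
- exact: ord_of_Zp_set_subsetC.
- by rewrite cardsE (leq_trans (card_size _)) // size_map size_V.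
move=> c cC; have cFK : val c \in FK by rewrite map_f // mem_enum inE cC.
have [W subW pK] := routes (val c) ltac:(by rewrite map_f ?mem_enum).
have [path_p len_p cols_p int_p] := Zp_route_path n_gt0 uV subW pK.
rewrite !Zp_of_ordK in path_p; eexists; split; [exact: path_p | | | exact: int_p].
  by rewrite len_p /= size_K.
apply: rainbow_setU1 cols_p _ K_lt; rewrite /= uK andbT.
by apply: contraL cFK => /(allP K_ok)/and3P[].
Qed.
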